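(* Let $S$ be a $1$-synchronizable system. Let $\tau\in T_0(S)$ and $a_1,\dots,a_n,b_1,\dots,b_m\in\Sigma_M$ be such that $\tau\cdot !?a_1\cdots !?a_n\in T_0(S)$, $\tau\cdot !?b_1\cdots !?b_m\in T_0(S)$, and $\mathrm{src}(a_i)\neq\mathrm{src}(b_j)$ for all $i\in\{1,\dots,n\}$, $j\in\{1,\dots,m\}$. Then for every shuffle $c_1\cdots c_{n+m}$ of the word $a_1\cdots a_n$ with the word $b_1\cdots b_m$: $\tau\cdot !?c_1\cdots !?c_{n+m}\in T_0(S)$, and $\tau\cdot !?a_1\cdots !?a_n\cdot !?b_1\cdots !?b_m\equiv_S\tau\cdot !?c_1\cdots !?c_{n+m}$.
   Context: A message set $M=(\Sigma_M,N,\mathrm{src},\mathrm{dst})$: finite set of messages, $N\ge1$ peers, $\mathrm{src}(a)\neq\mathrm{dst}(a)\in\{1,\dots,N\}$. Actions $!a$ (by peer $\mathrm{src}(a)$), $?a$ (by peer $\mathrm{dst}(a)$); traces are finite action sequences; $!?a$ abbreviates $!a\cdot?a$. For a trace $\tau$, $\pi_!(\tau)$ is the sequence of sent messages; $\mathrm{buf}_{i\to j}(\tau)$ is the word $w$ (if any) with (sent on $i\to j$) $=$ (received on $i\to j$)$\cdot w$. $\tau$ is FIFO ($k$-bounded FIFO) if for all $i,j$ and prefixes $\tau'$, $\mathrm{buf}_{i\to j}(\tau')$ is defined (and has length $\le k$); synchronous if of the form $!?a_1\cdots!?a_k$. A system $S=(P_1,\dots,P_N)$: finite automata $P_i$ (all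 states accepting) over actions of peer $i$, with one FIFO channel per ordered pair $i\neq j$. A configuration: one control state per peer and contents $w_{i,j}$ of channels; stable if all channels empty. $!a$ ($\mathrm{src}(a)=i,\mathrm{dst}(a)=j$) moves $P_i$ and appends $a$ to $w_{i,j}$; $?a$ moves $P_j$ and removes $a$ from the head of $w_{i,j}$; $c_0$ is the initial configuration. $T_k(S)$ ($k\ge1$): $k$-bounded FIFO traces $\tau$ with $c_0\xrightarrow{\tau}c$ for some $c$; $T_0(S)$: synchronous such traces; $T_\omega(S)=\bigcup_kT_k(S)$. $\tau_1\equiv_S\tau_2$ iff $\tau_1,\tau_2\in T_\omega(S)$ and there is $c$ with $c_0\xrightarrow{\tau_1}c$ and $c_0\xrightarrow{\tau_2}c$. $ST_k(S)=\{\pi_!(\tau)\mid\tau\in T_k(S)\}\cup\{(\pi_!(\tau),c)\mid c_0\xrightarrow{\tau}c,\ c\text{ stable},\ \tau\in T_k(S)\}$; $S$ is $1$-synchronizable if $ST_0(S)=ST_1(S)$. *)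

From mathcomp Require Import all_boot.
Set Implicit Arguments. Unset Strict Implicit. Unset Printing Implicit Defensive.

(* A message set M = (Sigma_M, N, src, dst); peers are 'I_N (i.e. 0..N-1
   instead of 1..N). *)
Record msgset := MsgSet {
  msg : finType;
  npeers : nat;
  npeers_pos : 0 < npeers;
  src : msg -> 'I_npeers;
  dst : msg -> 'I_npeers;
  src_neq_dst : forall a, src a != dst a
}.

Section Defs.
Variable M : msgset.

Inductive action := Send of msg M | Recv of msg M.

Definition trace := seq action.

(* !?a = !a . ?a ;  syn [a1;...;ak] = !?a1 ... !?ak *)
Definition sr (a : msg M) : trace := [:: Send a; Recv a].
Definition syn (s : seq (msg M)) : trace := flatten (map sr s).

Definition sends (t : trace) : seq (msg M) :=
  pmap (fun x => if x is Send a then Some a else None) t.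

Definition on_chan (i j : 'I_(npeers M)) (a : msg M) := (src a == i) && (dst a == j).

Definition sent_on i j (t : trace) : seq (msg M) :=
  [seq a <- sends t | on_chan i j a].
Definition recv_on i j (t : trace) : seq (msg M) :=
  [seq a <- pmap (fun x => if x is Recv a then Some a else None) t | on_chan i j a].

(* buf_{i->j}(t) is defined (= w with sent = received . w) iff received is a
   prefix of sent; its length is then size sent - size received. *)
Definition buf_defined i j (t : trace) : Prop :=
  exists w, sent_on i j t = recv_on i j t ++ w.

Definition is_FIFO (t : trace) : Prop :=
  forall n i j, buf_defined i j (take n t).

Definition is_kbounded_FIFO (k : nat) (t : trace) : Prop :=
  forall n i j, exists w, sent_on i j (take n t) = recv_on i j (take n t) ++ w
                          /\ size w <= k.

Definition is_synchronous (t : trace) : Prop := exists s, t = syn s.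

(* A system: one finite automaton per peer (all states accepting).
   The automaton of peer i has states st i, initial state init i and
   a transition relation trans i; only transitions labelled by actions of
   peer i (!a with src a = i, ?a with dst a = i) are ever used. *)
Record system := System {
  st : 'I_(npeers M) -> finType;
  init : forall i, st i;
  trans : forall i, st i -> action -> st i -> bool
}.

Variable S : system.

Record config := Config {
  cstate : forall i, st S i;
  cchan : 'I_(npeers M) -> 'I_(npeers M) -> seq (msg M)
}.

Definition c0 : config := Config (init S) (fun _ _ => [::]).

Definition stable (c : config) : Prop := forall i j, cchan c i j = [::].

Definition others_unchanged (p : 'I_(npeers M)) (c c' : config) : Prop :=
  forall j, j != p -> cstate c' j = cstate c j.

Definition step (c : config) (x : action) (c' : config) : Prop :=
  match x with
  | Send a =>
      trans (cstate c (src a)) (Send a) (cstate c' (src a))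
      /\ others_unchanged (src a) c c'
      /\ cchan c' = (fun i j => if on_chan i j a then rcons (cchan c i j) a
                                else cchan c i j)
  | Recv a =>
      cchan c (src a) (dst a) = a :: cchan c' (src a) (dst a)
      /\ trans (cstate c (dst a)) (Recv a) (cstate c' (dst a))
      /\ others_unchanged (dst a) c c'
      /\ (forall i j, ~~ on_chan i j a -> cchan c' i j = cchan c i j)
  end.

Inductive reach : config -> trace -> config -> Prop :=
  | reach_nil c : reach c [::] c
  | reach_cons c x c' t c'' : step c x c' -> reach c' t c'' -> reach c (x :: t) c''.

Definition executable (t : trace) : Prop := exists c, reach c0 t c.

Definition T (k : nat) (t : trace) : Prop :=
  match k with
  | 0 => is_synchronous t /\ executable t
  | _ => is_kbounded_FIFO k t /\ executable t
  end.

Definition T_omega (t : trace) : Prop := exists k, 0 < k /\ T k t.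

Definition equivS (t1 t2 : trace) : Prop :=
  T_omega t1 /\ T_omega t2 /\ exists c, reach c0 t1 c /\ reach c0 t2 c.

Definition ST (k : nat) (x : seq (msg M) + (seq (msg M) * config)) : Prop :=
  match x with
  | inl s => exists t, T k t /\ sends t = s
  | inr (s, c) => exists t, T k t /\ sends t = s /\ reach c0 t c /\ stable c
  end.

Definition one_synchronizable : Prop := forall x, ST 0 x <-> ST 1 x.

End Defs.

Inductive shuffle {A : Type} : seq A -> seq A -> seq A -> Prop :=
  | shuffle_nil : shuffle [::] [::] [::]
  | shuffle_l x u v w : shuffle u v w -> shuffle (x :: u) v (x :: w)
  | shuffle_r x u v w : shuffle u v w -> shuffle u (x :: v) (x :: w).

From mathcomp Require Import all_boot.
From Stdlib Require Import FunctionalExtensionality ClassicalEpsilon.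
Set Implicit Arguments. Unset Strict Implicit. Unset Printing Implicit Defensive.

(* A configuration reached by an execution is determined by the channel
   contents and by the local state of each peer along its projection of the
   trace.  1-synchronizability enters through 1-bounded traces in which one
   send overtakes others.  If [s ++ alpha ++ [a]] and [s ++ b :: alpha] are
   synchronously executable and [src b] sends none of [alpha] and [a], then
   [!?s !b !?alpha !a] is a 1-bounded execution, so [s ++ b :: alpha ++ [a]]
   is synchronously executable; inserting messages one at a time makes every
   shuffle of [u] and [v] executable after [tau].  Likewise, two adjacent
   exchanges of messages with distinct senders can be swapped without
   changing the local state of any peer other than the receiver of the first
   when it sends the second.  Bubble sorting [w] into [u ++ v] (or, for a peer
   sending in [v], into [v ++ u]) therefore preserves every local state, and
   both traces reach the same stable configuration. *)

Section Shuffle.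
Variable A : Type.
Implicit Types (x : A) (p u v w : seq A).

Lemma shuffle_catl p u v w : shuffle u v w -> shuffle (p ++ u) v (p ++ w).
Proof. by elim: p => //= x p IH /IH; apply: shuffle_l. Qed.

Lemma shuffle0s v : shuffle [::] v v.
Proof. by elim: v => [|x v]; [apply: shuffle_nil | apply: shuffle_r]. Qed.

Lemma shuffle_cat u v : shuffle u v (u ++ v).
Proof. by rewrite -[u]cats0 -catA; apply/shuffle_catl/shuffle0s. Qed.

Lemma shuffleC u v w : shuffle u v w -> shuffle v u w.
Proof. by elim=> *; [apply: shuffle_nil | apply: shuffle_r | apply: shuffle_l]. Qed.

Lemma shuffle_cat_cons u1 u2 x v : shuffle (u1 ++ u2) (x :: v) (u1 ++ x :: u2 ++ v).
Proof. by apply/shuffle_catl/shuffle_r/shuffle_cat. Qed.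

End Shuffle.

Lemma functional_choice_dep (I : Type) (B : I -> Type) (P : forall i, B i -> Prop) :
  (forall i, exists b, P i b) -> exists f : forall i, B i, forall i, P i (f i).
Proof.
move=> ex; exists (fun i => proj1_sig (constructive_indefinite_description _ (ex i))).
by move=> i; case: constructive_indefinite_description.
Qed.

Section Semantics.
Variables (M : msgset) (S : system M).
Notation peer := 'I_(npeers M).
Notation chans := (peer -> peer -> seq (msg M)).
Implicit Types (a b : msg M) (s u v w : seq (msg M)) (x : action M) (t : trace M).

Lemma sends_cat t1 t2 : sends (t1 ++ t2) = sends t1 ++ sends t2.
Proof. exact: pmap_cat. Qed.

Lemma syn_cat u v : syn (u ++ v) = syn u ++ syn v.
Proof. by rewrite /syn map_cat flatten_cat. Qed.

Lemma sends_syn s : sends (syn s) = s.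
Proof. by elim: s => //= a s IH; rewrite /syn /= -/(syn s) /sends /= -/(sends _) IH. Qed.

Definition actor x : peer := match x with Send a => src a | Recv a => dst a end.

Definition proj t (i : peer) : trace M := [seq x <- t | actor x == i].

Lemma proj_cat t1 t2 i : proj (t1 ++ t2) i = proj t1 i ++ proj t2 i.
Proof. exact: filter_cat. Qed.

Inductive local_run (i : peer) : st S i -> trace M -> st S i -> Prop :=
| local_run_nil q : local_run q [::] q
| local_run_cons q x q' t q'' :
    trans q x q' -> local_run q' t q'' -> local_run q (x :: t) q''.

Lemma local_run_catl i (q q'' : st S i) t1 t2 :
  local_run q (t1 ++ t2) q'' -> exists q', local_run q t1 q'.
Proof.
elim: t1 q => [|x t1 IH] q run; first by exists q; constructor.
inversion run as [|? ? q1 ? ? hx hrun]; subst.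
by have [q2 ?] := IH _ hrun; exists q2; apply: local_run_cons hx _.
Qed.

Lemma reach_local_run c t d :
  reach c t d -> forall i, local_run (cstate c i) (proj t i) (cstate d i).
Proof.
elim=> {c t d} [c|c x c' t c'' hstep _ IH] i /=; first by constructor.
have [<-|ne] := eqVneq (actor x) i.
  apply: local_run_cons (IH _).
  by case: x hstep => a /= [] // ? [] ? [].
have -> : cstate c i = cstate c' i.
  case: x hstep ne => a /= => [[_ [same _]]|[_ [_ [same _]]]] ne;
  by rewrite same // eq_sym.
exact: IH.
Qed.

(* Channel contents along a trace in which a send is enabled only on an empty
   channel, so that no channel ever holds two messages. *)
Definition chan_step (ch : chans) x : option chans :=
  match x with
  | Send a =>
      if ch (src a) (dst a) is [::] then
        Some (fun i j => if on_chan i j a then rcons (ch i j) a else ch i j)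
      else None
  | Recv a =>
      if ch (src a) (dst a) is b :: r then
        if b == a then Some (fun i j => if on_chan i j a then r else ch i j)
        else None
      else None
  end.

Fixpoint chan_run (ch : chans) t : option chans :=
  if t is x :: t' then
    if chan_step ch x is Some ch' then chan_run ch' t' else None
  else Some ch.

Definition ch0 : chans := fun _ _ => [::].

Lemma chan_run_cat ch t1 t2 :
  chan_run ch (t1 ++ t2) = if chan_run ch t1 is Some ch' then chan_run ch' t2 else None.
Proof. by elim: t1 ch => [|x t1 IH] ch //=; case: (chan_step ch x). Qed.

Lemma chan_run_cat_Some ch t1 t2 ch1 :
  chan_run ch t1 = Some ch1 -> chan_run ch (t1 ++ t2) = chan_run ch1 t2.
Proof. by rewrite chan_run_cat => ->. Qed.

Lemma chan_run_sent_recv ch t ch' : chan_run ch t = Some ch' ->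
  forall i j, ch i j ++ sent_on i j t = recv_on i j t ++ ch' i j.
Proof.
elim: t ch => [|x t IH] ch /=.
  by move=> [<-] i j; rewrite /sent_on /recv_on /= cats0.
case E: (chan_step ch x) => [ch1|] // run i j; have := IH _ run i j.
rewrite /sent_on /recv_on /=; case: x E => a /=.
  case: (ch _ _) => // - [<-]; case: ifP => /= _ <- //; by rewrite cat_rcons.
case Ech: (ch (src a) (dst a)) => [|b r] //; case: eqP => // eba [<-].
case: ifP => //= /andP [/eqP <- /eqP <-] <-.
by rewrite Ech eba.
Qed.

Lemma chan_run_size_le1 ch t ch' : (forall i j, size (ch i j) <= 1) ->
  chan_run ch t = Some ch' -> forall i j, size (ch' i j) <= 1.
Proof.
elim: t ch => [|x t IH] ch /= le1; first by move=> [<-].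
case E: (chan_step ch x) => [ch1|] //; apply: IH => i j.
case: x E => a /=.
  case Ech: (ch _ _) => // - [<-]; case: ifP => // /andP [/eqP <- /eqP <-].
  by rewrite size_rcons Ech.
case Ech: (ch (src a) (dst a)) => [|b r] //; case: eqP => // _ [<-].
case: ifP => // _; have := le1 (src a) (dst a).
by rewrite Ech /= => /ltnW.
Qed.

Lemma chan_run_1bounded t ch : chan_run ch0 t = Some ch -> is_kbounded_FIFO 1 t.
Proof.
move=> run n i j.
have : chan_run ch0 (take n t) <> None.
  by move: run; rewrite -{1}(cat_take_drop n t) chan_run_cat; case: chan_run.
case E: (chan_run ch0 (take n t)) => [chn|] // _.
exists (chn i j); split; first exact: chan_run_sent_recv E i j.
by apply: (chan_run_size_le1 _ E).
Qed.

Lemma chan_run_syn ch s : (forall a, a \in s -> ch (src a) (dst a) = [::]) ->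
  chan_run ch (syn s) = Some ch.
Proof.
elim: s => //= a s IH empty; have e := empty a (mem_head _ _).
rewrite /on_chan e /= !eqxx /= e /= eqxx.
have -> : (fun i j => if (src a == i) && (dst a == j) then [::]
          else if (src a == i) && (dst a == j) then rcons (ch i j) a else ch i j) = ch.
  apply: functional_extensionality => i; apply: functional_extensionality => j.
  by case: ifP => [/andP [/eqP <- /eqP <-]|->].
by apply: IH => b bs; apply: empty; rewrite inE bs orbT.
Qed.

Lemma chan_run_syn0 s : chan_run ch0 (syn s) = Some ch0.
Proof. exact: chan_run_syn. Qed.

Lemma chan_run_swap_block a b : src a != src b ->
  chan_run ch0 [:: Send b; Send a; Recv a; Recv b] = Some ch0.
Proof.
move=> ab; have ba : (src b == src a) = false by rewrite eq_sym (negbTE ab).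
rewrite /ch0; do 6!rewrite /= /on_chan ?ba ?(negbTE ab) ?eqxx.
congr Some; apply: functional_extensionality => i; apply: functional_extensionality => j.
by do !case: ifP.
Qed.

Lemma step_dfwith c x ch (q : st S (actor x)) :
  chan_step (cchan c) x = Some ch -> trans (cstate c (actor x)) x q ->
  step c x (Config (dfwith (cstate c) q) ch).
Proof.
case: x q => a q /=.
  case: (cchan c _ _) => // - [<-] tr; split; first by rewrite dfwith_in.
  by split=> // j ne /=; rewrite dfwith_out // eq_sym.
case Ech: (cchan c (src a) (dst a)) => [|b r] //; case: eqP => // -> [<-] tr.
split; first by rewrite /on_chan !eqxx.
split; first by rewrite dfwith_in.
split; first by move=> j ne /=; rewrite dfwith_out // eq_sym.
by move=> i j /negbTE ->.
Qed.

Lemma local_runs_reach c t ch (q : forall i, st S i) :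
  chan_run (cchan c) t = Some ch ->
  (forall i, local_run (cstate c i) (proj t i) (q i)) -> reach c t (Config q ch).
Proof.
elim: t c => [|x t IH] c /=.
  move=> [<-] runs; have -> : q = cstate c.
    by apply: functional_extensionality_dep => i; have := runs i; inversion 1.
  by case: c {runs}; constructor.
case E: (chan_step (cchan c) x) => [ch1|] // run runs.
have := runs (actor x); rewrite /= eqxx; inversion 1 as [|? ? q' ? ? tr rest]; subst.
apply: reach_cons (step_dfwith E tr) _; apply: IH => // i /=.
have [|j ne] := dfwithP (cstate c) q' i; first exact: rest.
by have := runs j; rewrite /= (negbTE ne).
Qed.

Definition runnable t := forall i, exists q, local_run (init S i) (proj t i) q.

Lemma runnable_catl t1 t2 : runnable (t1 ++ t2) -> runnable t1.
Proof. by move=> run i; have [q] := run i; rewrite proj_cat => /local_run_catl. Qed.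

Lemma executable_runnable t : executable S t -> runnable t.
Proof. by case=> d rd i; exists (cstate d i); apply: reach_local_run rd i. Qed.

Lemma runnable_reach t ch :
  chan_run ch0 t = Some ch -> runnable t -> exists f, reach (c0 S) t (Config f ch).
Proof. by move=> run /functional_choice_dep [f runs]; exists f; apply: local_runs_reach. Qed.

Lemma syn_sends t : is_synchronous t -> t = syn (sends t).
Proof. by case=> s ->; rewrite sends_syn. Qed.

Lemma T_omega_syn s : executable S (syn s) -> T_omega S (syn s).
Proof. by move=> ex; exists 1; do 2!split=> //; apply: chan_run_1bounded (chan_run_syn0 s). Qed.

Lemma T0_syn s : runnable (syn s) -> T S 0 (syn s).
Proof.
move/(runnable_reach (chan_run_syn0 s))=> [f rf].
by split; [exists s | exists (Config f ch0)].
Qed.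

Lemma equivS_syn u v :
  (forall i, exists q, local_run (init S i) (proj (syn u) i) q /\
                       local_run (init S i) (proj (syn v) i) q) ->
  equivS S (syn u) (syn v).
Proof.
case/functional_choice_dep=> f runs.
have reach_f s : (forall i, local_run (init S i) (proj (syn s) i) (f i)) ->
    reach (c0 S) (syn s) (Config f ch0).
  by move=> runs_s; apply: local_runs_reach => //; apply: chan_run_syn0.
have ru : reach (c0 S) (syn u) (Config f ch0) by apply: reach_f => i; case: (runs i).
have rv : reach (c0 S) (syn v) (Config f ch0) by apply: reach_f => i; case: (runs i).
split; first by apply: T_omega_syn; exists (Config f ch0).
split; first by apply: T_omega_syn; exists (Config f ch0).
by exists (Config f ch0).
Qed.

Definition local_sub i u v := forall q,
  local_run (init S i) (proj (syn u) i) q -> local_run (init S i) (proj (syn v) i) q.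

Lemma local_sub_trans i u v w : local_sub i u v -> local_sub i v w -> local_sub i u w.
Proof. by move=> uv vw q /uv /vw. Qed.

Lemma proj_swap_block a b j : src a != src b ->
  proj [:: Send b; Send a; Recv a; Recv b] j =
  proj (syn (if (dst a == j) && (src b == j) then [:: b; a] else [:: a; b])) j.
Proof.
move=> ab; rewrite /proj.
have [eb|nb] := eqVneq (src b) j; last by rewrite andbF /= (negbTE nb).
have sa : (src a == j) = false by rewrite -eb (negbTE ab).
have db : (dst b == j) = false by rewrite -eb eq_sym (negbTE (src_neq_dst b)).
by rewrite andbT; case da: (dst a == j); rewrite /= eb eqxx sa db da.
Qed.

Section OneSynchronizable.
Hypothesis sync1 : one_synchronizable S.

Lemma runnable_sync t ch :
  chan_run ch0 t = Some ch -> runnable t -> runnable (syn (sends t)).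
Proof.
move=> run /(runnable_reach run) [f rf].
have /sync1 [t' [[sync_t' ex_t'] <-]] : ST (S := S) 1 (inl (sends t)).
  by exists t; split=> //; split; [exact: chan_run_1bounded run | exists (Config f ch)].
by rewrite -(syn_sends sync_t'); apply: executable_runnable.
Qed.

Lemma local_run_sync_stable t (f : forall i, st S i) :
  chan_run ch0 t = Some ch0 -> (forall i, local_run (init S i) (proj t i) (f i)) ->
  forall i, local_run (init S i) (proj (syn (sends t)) i) (f i).
Proof.
move=> run runs; have rf : reach (c0 S) t (Config f ch0) by apply: local_runs_reach.
have /sync1 [t' [[sync_t' _] [<- [rd _]]]] : ST (S := S) 1 (inr (sends t, Config f ch0)).
  exists t; split; first by split; [exact: chan_run_1bounded run | exists (Config f ch0)].
  by do 2!split=> //.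
by rewrite -(syn_sends sync_t'); apply: reach_local_run rd.
Qed.

(* [!b] waits in its channel while [alpha] and [!a] are performed: no channel
   ever holds two messages, so 1-synchronizability applies. *)
Lemma runnable_send_ahead s alpha a b :
  runnable (syn (s ++ rcons alpha a)) -> runnable (syn (s ++ b :: alpha)) ->
  (forall m, m \in alpha -> src m != src b) -> src a != src b ->
  runnable (syn (s ++ b :: rcons alpha a)).
Proof.
move=> run_a run_b alpha_b ab.
pose t := syn s ++ Send b :: syn alpha ++ [:: Send a].
have -> : s ++ b :: rcons alpha a = sends t.
  by rewrite /t sends_cat sends_syn /= sends_cat sends_syn cats1.
have [ch run] : exists ch, chan_run ch0 t = Some ch.
  rewrite /t chan_run_cat chan_run_syn0 /= chan_run_cat chan_run_syn /=.
    by rewrite /on_chan [src b == _]eq_sym (negbTE ab) /=; eexists.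
  by move=> m /alpha_b mb /=; rewrite /on_chan eq_sym (negbTE mb).
apply: (runnable_sync run) => i.
rewrite /t !proj_cat /= proj_cat /proj /= -/(proj (syn alpha) i).
have [ea|na] := eqVneq (src a) i.
  have -> : (src b == i) = false by rewrite -ea eq_sym (negbTE ab).
  have [q] := run_a i; rewrite -cats1 !syn_cat !proj_cat /proj /= ea eqxx.
  have -> : (dst a == i) = false by rewrite -ea eq_sym (negbTE (src_neq_dst a)).
  by rewrite cats0; exists q.
rewrite cats0; have [eb|nb] := eqVneq (src b) i.
  have [q] := run_b i; rewrite syn_cat proj_cat /proj /= eb eqxx.
  have -> : (dst b == i) = false by rewrite -eb eq_sym (negbTE (src_neq_dst b)).
  by exists q.
have [q] := run_a i; rewrite -cats1 !syn_cat !proj_cat catA.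
by case/local_run_catl=> q' ?; exists q'.
Qed.

Lemma runnable_insert s a v :
  runnable (syn (rcons s a)) -> runnable (syn (s ++ v)) ->
  (forall m, m \in v -> src m != src a) -> runnable (syn (s ++ a :: v)).
Proof.
elim/last_ind: v => [|v b IH] run_a run_v v_a; first by rewrite cats1.
have v'_a m : m \in v -> src m != src a by move=> mv; rewrite v_a // mem_rcons inE mv orbT.
apply: runnable_send_ahead => //; last by rewrite v_a // mem_rcons mem_head.
apply: IH => //; move: run_v; rewrite -cats1 catA syn_cat; exact: runnable_catl.
Qed.

Lemma runnable_shuffle u v w : shuffle u v w -> forall s,
  runnable (syn (s ++ u)) -> runnable (syn (s ++ v)) ->
  (forall a b, a \in u -> b \in v -> src a != src b) -> runnable (syn (s ++ w)).
Proof.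
elim=> {u v w} [//|x u v w _ IH|x u v w _ IH] s run_u run_v uv;
  rewrite -cat_rcons; apply: IH; rewrite ?cat_rcons //.
- apply: runnable_insert => //; last by move=> b bv; rewrite eq_sym uv ?mem_head.
  by move: run_u; rewrite -cat_rcons syn_cat => /runnable_catl.
- by move=> a b au; apply: uv; rewrite inE au orbT.
- apply: runnable_insert => //; last by move=> a au; rewrite uv ?mem_head.
  by move: run_v; rewrite -cat_rcons syn_cat => /runnable_catl.
- by move=> a b au bv; apply: uv; rewrite ?inE ?bv ?orbT.
Qed.

(* The two orders merge into the stable trace [!b !a ?a ?b], which every peer
   but [dst a = src b] sees as [!?a !?b]; 1-synchronizability replaces it by
   the synchronous order [b; a] with the same final local states. *)
Lemma local_sub_swap s s' a b i :
  src a != src b -> ~~ ((dst a == i) && (src b == i)) ->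
  runnable (syn (s ++ [:: a; b] ++ s')) -> runnable (syn (s ++ [:: b; a] ++ s')) ->
  local_sub i (s ++ [:: a; b] ++ s') (s ++ [:: b; a] ++ s').
Proof.
move=> ab not_i run_ab run_ba q run_i.
pose t := syn s ++ [:: Send b; Send a; Recv a; Recv b] ++ syn s'.
have stable_t : chan_run ch0 t = Some ch0.
  rewrite /t (chan_run_cat_Some _ (chan_run_syn0 s)).
  by rewrite (chan_run_cat_Some _ (chan_run_swap_block ab)) chan_run_syn0.
have proj_t j : proj t j = proj (syn (s ++
    (if (dst a == j) && (src b == j) then [:: b; a] else [:: a; b]) ++ s')) j.
  by rewrite /t !syn_cat !proj_cat proj_swap_block.
have [f runs] : exists f, forall j, local_run (init S j) (proj t j) (f j).
  apply: (functional_choice_dep (P := fun j q => local_run (init S j) (proj t j) q)) => j.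
  by rewrite proj_t; case: ifP => _; [apply: run_ba | apply: run_ab].
have runs_q j : local_run (init S j) (proj t j) (dfwith f q j).
  have [|j' _] := dfwithP f q j; last exact: runs.
  by rewrite proj_t (negbTE not_i).
have := local_run_sync_stable stable_t runs_q i.
by rewrite dfwith_in /t !sends_cat !sends_syn.
Qed.

Lemma local_sub_bubble i b s u r :
  src b != i -> (forall a, a \in u -> src a != src b) ->
  (forall u1 u2, u1 ++ u2 = u -> runnable (syn (s ++ u1 ++ b :: u2 ++ r))) ->
  local_sub i (s ++ u ++ b :: r) (s ++ b :: u ++ r).
Proof.
elim/last_ind: u r => [|u a IH] r bi u_b run_split; first by [].
have e1 : s ++ rcons u a ++ b :: r = (s ++ u) ++ [:: a; b] ++ r by rewrite -cats1 -!catA.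
have e2 : (s ++ u) ++ [:: b; a] ++ r = s ++ u ++ b :: a :: r by rewrite -!catA.
rewrite e1 cat_rcons; apply: (local_sub_trans (v := (s ++ u) ++ [:: b; a] ++ r)).
  apply: local_sub_swap.
  - by apply: u_b; rewrite mem_rcons mem_head.
  - by rewrite negb_and bi orbT.
  - by rewrite -e1; apply: (run_split _ [::]); rewrite cats0.
  - by rewrite e2; apply: (run_split u [:: a]); rewrite cats1.
rewrite e2; apply: IH => // [m mu|u1 u2 eu]; first by apply: u_b; rewrite mem_rcons inE mu orbT.
by rewrite -(cat_rcons a u2); apply: run_split; rewrite -rcons_cat eu.
Qed.

Lemma local_sub_shuffle u v w : shuffle u v w -> forall s i,
  (forall b, b \in v -> src b != i) ->
  (forall w', shuffle u v w' -> runnable (syn (s ++ w'))) ->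
  (forall a b, a \in u -> b \in v -> src a != src b) ->
  local_sub i (s ++ u ++ v) (s ++ w).
Proof.
elim=> {u v w} [|a u v w _ IH|b u v w _ IH] s i v_i run_shuffle uv; first by [].
  rewrite /= -!cat_rcons; apply: IH => // [w' uvw'|a' b' au bv].
    by rewrite cat_rcons; apply/run_shuffle/shuffle_l.
  by apply: uv; rewrite ?inE ?au ?orbT.
apply: (local_sub_trans (v := s ++ b :: u ++ v)).
  apply: local_sub_bubble => [|a au|u1 u2 eu].
  - by apply: v_i; rewrite mem_head.
  - by apply: uv; rewrite ?mem_head.
  - by apply: run_shuffle; rewrite -eu; apply: shuffle_cat_cons.
rewrite -!cat_rcons; apply: IH => [b' bv|w' uvw'|a' b' au bv].
- by apply: v_i; rewrite inE bv orbT.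
- by rewrite cat_rcons; apply/run_shuffle/shuffle_r.
- by apply: uv; rewrite ?inE ?bv ?orbT.
Qed.

(* Moving the messages of one side past the other is invisible to a peer that
   sends nothing on the moving side, and a peer sending in [v] sends nothing
   in [u]. *)
Lemma common_local_state s u v w :
  runnable (syn (s ++ u)) -> runnable (syn (s ++ v)) ->
  (forall a b, a \in u -> b \in v -> src a != src b) -> shuffle u v w ->
  forall i, exists q, local_run (init S i) (proj (syn (s ++ u ++ v)) i) q /\
                      local_run (init S i) (proj (syn (s ++ w)) i) q.
Proof.
move=> run_u run_v uv uvw i.
have run_uv w' : shuffle u v w' -> runnable (syn (s ++ w')).
  by move=> uvw'; apply: runnable_shuffle uvw' s run_u run_v uv.
have vu : forall b a, b \in v -> a \in u -> src b != src a.
  by move=> b a bv au; rewrite eq_sym uv.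
have run_vu w' : shuffle v u w' -> runnable (syn (s ++ w')) by move/shuffleC/run_uv.
have [v_i|/allPn [b bv /negPn /eqP bi]] := boolP (all (fun b => src b != i) v).
  have [q run_q] := run_uv _ (shuffle_cat u v) i; exists q; split=> //.
  by apply: local_sub_shuffle uvw s i (allP v_i) run_uv uv _ run_q.
have u_i a : a \in u -> src a != i by rewrite -bi => au; apply: uv.
have [q run_q] := run_vu _ (shuffle_cat v u) i; exists q; split.
  by apply: local_sub_shuffle (shuffleC (shuffle_cat u v)) s i u_i run_vu vu _ run_q.
by apply: local_sub_shuffle (shuffleC uvw) s i u_i run_vu vu _ run_q.
Qed.

End OneSynchronizable.
End Semantics.

Theorem lemma4p6 (M : msgset) (S : system M) (tau : trace M)
    (u v : seq (msg M)) :
  one_synchronizable S ->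
  T S 0 tau ->
  T S 0 (tau ++ syn u) ->
  T S 0 (tau ++ syn v) ->
  (forall a b, a \in u -> b \in v -> src a != src b) ->
  forall w, shuffle u v w ->
    T S 0 (tau ++ syn w) /\ equivS S (tau ++ syn u ++ syn v) (tau ++ syn w).
Proof.
move=> sync1 [[s ->] _] [_ /executable_runnable run_u].
move=> [_ /executable_runnable run_v] uv w uvw.
rewrite -!syn_cat in run_u run_v *.
split; first exact/T0_syn/(runnable_shuffle sync1 uvw).
exact/equivS_syn/(common_local_state sync1).
Qed.
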